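(* Let $n\ge 3$ and $d=\lfloor n/2\rfloor$. Let $x\in Gr^{>0}(2,n)$ be a minimizer of $E$ on $Gr^{>0}(2,n)$, and let $X$ be a spanning matrix of $x$ with all $\Delta_{i,j}(X)>0$ ($i<j$), scaled so that $D_1=\sin(\pi/n)$. Then: (1) $D_k=s_k$ for all $k\in\{1,\dots,n-1\}$; (2) $s_1\le \Delta_{i,j}(X)\le s_d$ for all $1\le i<j\le n$; (3) $\Delta_{i,j}(X)=s_1$ for all $(i,j)\in O_1$ and $\Delta_{i,j}(X)=s_d$ for all $(i,j)\in O_d$.
   Context: For a real $2\times n$ matrix $X$ and $1\le i<j\le n$, $\Delta_{i,j}(X)$ is the determinant of the $2\times2$ submatrix of columns $i,j$. $Gr^{>0}(2,n)$ is the set of 2-dimensional subspaces of $\mathbb{R}^n$ having a spanning $2\times n$ matrix $X$ (rows spanning the subspace) with $\Delta_{i,j}(X)>0$ for all $i<j$; $E(x)=\max_{i<j}\Delta_{i,j}(X)/\min_{i<j}\Delta_{i,j}(X)$. Set $s_k=\sin(k\pi/n)$. Let $\sigma$ act on strictly increasing pairs $(i,j)$, $1\le i<j\le n$, by $\sigma(i,j)=(i+1,j+1)$ if $j<n$ and $\sigma(i,n)=(1,i+1)$. For $k\in\{1,\dots,n-1\}$ the $k$-th orbit is the multiset $O_k=\{\sigma^m(1,k+1): m=0,\dots,n-1\}$, and $D_k=\left(\prod_{m=0}^{n-1}\Delta_{\sigma^m(1,k+1)}(X)\right)^{1/n}$ is the geometric mean of the coordinates over $O_k$. *)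

From Stdlib Require Import Reals Lra Lia List Arith.
Import ListNotations.
Open Scope R_scope.

(* A real 2 x n matrix X is given by its two rows [r1 r2 : nat -> R];
   column i (1 <= i <= n) is (r1 i, r2 i). Values outside 1..n are irrelevant. *)

Definition Dij (r1 r2 : nat -> R) (p : nat * nat) : R :=
  r1 (fst p) * r2 (snd p) - r1 (snd p) * r2 (fst p).

Definition pairs (n : nat) : list (nat * nat) :=
  flat_map (fun i => map (fun j => (i, j)) (seq (S i) (n - i))) (seq 1 n).

Definition totally_positive (n : nat) (r1 r2 : nat -> R) : Prop :=
  forall i j : nat, (1 <= i)%nat -> (i < j)%nat -> (j <= n)%nat ->
    0 < Dij r1 r2 (i, j).

Definition maxDelta (n : nat) (r1 r2 : nat -> R) : R :=
  fold_right Rmax 0 (map (Dij r1 r2) (pairs n)).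

(* minimum over the (nonempty, for n >= 2) list of coordinates; the default
   value maxDelta is itself an element of the list, so this is the true min. *)
Definition minDelta (n : nat) (r1 r2 : nat -> R) : R :=
  fold_right Rmin (maxDelta n r1 r2) (map (Dij r1 r2) (pairs n)).

Definition Eratio (n : nat) (r1 r2 : nat -> R) : R :=
  maxDelta n r1 r2 / minDelta n r1 r2.

Definition s (n k : nat) : R := sin (INR k * PI / INR n).

Definition sigmaP (n : nat) (p : nat * nat) : nat * nat :=
  if Nat.ltb (snd p) n then (S (fst p), S (snd p)) else (1%nat, S (fst p)).

(* O_k = [sigmaP^m (1,k+1) | m = 0..n-1] (as a list = multiset) *)
Definition orbit (n k : nat) : list (nat * nat) :=
  map (fun m => Nat.iter m (sigmaP n) (1%nat, S k)) (seq 0 n).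

Definition prodR (l : list R) : R := fold_right Rmult 1 l.

Definition Dk (n k : nat) (r1 r2 : nat -> R) : R :=
  Rpower (prodR (map (Dij r1 r2) (orbit n k))) (1 / INR n).

From Stdlib Require Import Reals Lra Lia List Arith.
Open Scope R_scope.

(** Extend the columns of [X] to all [t : nat] by the twisted periodicity
    [v_{t+n} = -v_t]. The minors [Delta(t, u)] of the extension are [n]-periodic,
    positive whenever [0 < u - t < n], and the orbit [O_k] consists exactly of the
    pairs [(t, t+k)], [0 <= t < n]. Hence [D_k] is the geometric mean of the
    diagonal minors [t |-> Delta(t, t+k)] over one period, and a cyclic shift gives
    [D_{n-k} = D_k]. Averaging the three-term Plücker relation for the columns
    [t, t+1, t+k, t+k+1] with the superadditivity of geometric means gives
    [D_k^2 >= D_{k-1} D_{k+1} + D_1^2], while [s_k^2 = s_{k-1} s_{k+1} + s_1^2].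
    A comparison argument for such sequences yields [D_k >= s_k] once [D_1 = s_1].
    Comparing the minimizer with the regular polygon ([E = s_{n/2} / s_1]) and using
    [min Delta <= D_1], [D_{n/2} <= max Delta] pins [min Delta = s_1],
    [max Delta = s_{n/2}] and [D_{n/2} = s_{n/2}]; equality propagates down the
    comparison to every [D_k], and equality in the geometric-mean bounds forces the
    orbits [O_1] and [O_{n/2}] to be constant. *)

Fixpoint lsum (l : list nat) (f : nat -> R) : R :=
  match l with nil => 0 | t :: l' => f t + lsum l' f end.

Lemma lsum_ext (l : list nat) (f g : nat -> R) :
  (forall t, In t l -> f t = g t) -> lsum l f = lsum l g.
Proof.
  induction l as [|a l IH]; simpl; intros H; [reflexivity|].
  rewrite H, IH by auto. reflexivity.
Qed.

Lemma lsum_plus (l : list nat) (f g : nat -> R) :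
  lsum l (fun t => f t + g t) = lsum l f + lsum l g.
Proof. induction l as [|a l IH]; simpl; [lra|]. rewrite IH. lra. Qed.

Lemma lsum_scale (l : list nat) (c : R) (f : nat -> R) :
  lsum l (fun t => c * f t) = c * lsum l f.
Proof. induction l as [|a l IH]; simpl; [lra|]. rewrite IH. lra. Qed.

Lemma lsum_const (l : list nat) (c : R) : lsum l (fun _ => c) = INR (length l) * c.
Proof.
  induction l as [|a l IH]; simpl lsum; simpl length; [simpl; lra|].
  rewrite IH, S_INR. lra.
Qed.

Lemma lsum_le (l : list nat) (f g : nat -> R) :
  (forall t, In t l -> f t <= g t) -> lsum l f <= lsum l g.
Proof.
  induction l as [|a l IH]; simpl; intros H; [lra|].
  assert (f a <= g a) by auto. assert (lsum l f <= lsum l g) by auto. lra.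
Qed.

Lemma lsum_le_eq (l : list nat) (f g : nat -> R) :
  (forall t, In t l -> f t <= g t) -> lsum l f = lsum l g ->
  forall t, In t l -> f t = g t.
Proof.
  induction l as [|a l IH]; simpl; intros Hle Heq t Ht; [contradiction|].
  assert (Ha : f a <= g a) by auto.
  assert (Hl : lsum l f <= lsum l g) by (apply lsum_le; auto).
  destruct Ht as [<-|Ht]; [lra|].
  apply IH; auto. lra.
Qed.

Lemma lsum_shift (n j : nat) (f : nat -> R) :
  (forall t, f (t + n)%nat = f t) ->
  lsum (seq 0 n) (fun t => f (t + j)%nat) = lsum (seq 0 n) f.
Proof.
  assert (Hone : forall g, (forall t, g (t + n)%nat = g t) ->
            lsum (seq 0 n) (fun t => g (S t)) = lsum (seq 0 n) g).
  { intros g Hg. destruct n as [|n]; [reflexivity|].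
    assert (Hseq : forall a m, lsum (seq a m) (fun t => g (S t)) = lsum (seq (S a) m) g).
    { intros a m. revert a; induction m; intros a; simpl; [reflexivity|]. now rewrite IHm. }
    assert (Happ : forall l1 l2, lsum (l1 ++ l2) g = lsum l1 g + lsum l2 g).
    { intros l1 l2. induction l1; simpl; [lra|]. rewrite IHl1. lra. }
    rewrite Hseq, seq_S, Happ. specialize (Hg 0%nat). simpl in *. rewrite Hg. lra. }
  intros Hper. induction j as [|j IH].
  - apply lsum_ext. intros t _. f_equal. lia.
  - rewrite <- IH, <- (Hone (fun u => f (u + j)%nat)).
    + apply lsum_ext. intros t _. f_equal. lia.
    + intros t. replace (t + n + j)%nat with (t + j + n)%nat by lia. apply Hper.
Qed.

Lemma INR_length_pos (l : list nat) : l <> nil -> 0 < INR (length l).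
Proof. intros Hl. apply lt_0_INR. destruct l; [congruence|simpl; lia]. Qed.

Lemma seq0_nonempty (n : nat) : (n <> 0)%nat -> seq 0 n <> nil.
Proof. destruct n; [lia|discriminate]. Qed.

Definition gmean (l : list nat) (f : nat -> R) : R :=
  exp (lsum l (fun t => ln (f t)) / INR (length l)).

Lemma gmean_ext (l : list nat) (f g : nat -> R) :
  (forall t, In t l -> f t = g t) -> gmean l f = gmean l g.
Proof. intros H. unfold gmean. f_equal. f_equal. apply lsum_ext. intros t Ht. now rewrite H. Qed.

Lemma gmean_pos (l : list nat) (f : nat -> R) : 0 < gmean l f.
Proof. apply exp_pos. Qed.

Lemma gmean_mult (l : list nat) (f g : nat -> R) :
  (forall t, In t l -> 0 < f t) -> (forall t, In t l -> 0 < g t) ->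
  gmean l (fun t => f t * g t) = gmean l f * gmean l g.
Proof.
  intros Hf Hg. unfold gmean. rewrite <- exp_plus, <- Rdiv_plus_distr, <- lsum_plus.
  f_equal. f_equal. apply lsum_ext. intros t Ht. apply ln_mult; auto.
Qed.

(* AM-GM inequality, from [1 + x <= exp x] applied to [x = ln (u t / G)]. *)
Lemma gmean_le_amean (l : list nat) (u : nat -> R) :
  l <> nil -> (forall t, In t l -> 0 < u t) ->
  gmean l u <= lsum l u / INR (length l).
Proof.
  intros Hl Hu. set (N := INR (length l)).
  assert (HN : 0 < N) by now apply INR_length_pos.
  set (G := gmean l u).
  assert (HG : 0 < G) by apply gmean_pos.
  assert (HlnG : N * ln G = lsum l (fun t => ln (u t))).
  { unfold G, gmean. rewrite ln_exp. fold N. field. lra. }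
  assert (Hterm : lsum l (fun t => ln (u t) + (1 - ln G)) <= lsum l (fun t => / G * u t)).
  { apply lsum_le. intros t Ht.
    pose proof (exp_ineq1_le (ln (u t) - ln G)) as He.
    unfold Rminus in He. rewrite exp_plus, exp_ln, exp_Ropp, exp_ln in He by auto. lra. }
  rewrite lsum_plus, lsum_const, lsum_scale in Hterm. fold N in Hterm.
  apply Rmult_le_reg_r with (N * / G); [apply Rmult_lt_0_compat; auto; now apply Rinv_0_lt_compat|].
  replace (G * (N * / G)) with N by (field; lra).
  replace (lsum l u / N * (N * / G)) with (/ G * lsum l u) by (field; lra).
  lra.
Qed.

Lemma gmean_superadditive (l : list nat) (a b : nat -> R) :
  l <> nil -> (forall t, In t l -> 0 < a t) -> (forall t, In t l -> 0 < b t) ->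
  gmean l a + gmean l b <= gmean l (fun t => a t + b t).
Proof.
  intros Hl Ha Hb. set (w := fun t => a t + b t).
  assert (Hw : forall t, In t l -> 0 < w t).
  { intros t Ht. unfold w. specialize (Ha t Ht). specialize (Hb t Ht). lra. }
  assert (Hpa : forall t, In t l -> 0 < a t / w t) by (intros; apply Rdiv_lt_0_compat; auto).
  assert (Hpb : forall t, In t l -> 0 < b t / w t) by (intros; apply Rdiv_lt_0_compat; auto).
  assert (Ea : gmean l a = gmean l w * gmean l (fun t => a t / w t)).
  { rewrite <- gmean_mult by auto. apply gmean_ext. intros t Ht. specialize (Hw t Ht). field. lra. }
  assert (Eb : gmean l b = gmean l w * gmean l (fun t => b t / w t)).
  { rewrite <- gmean_mult by auto. apply gmean_ext. intros t Ht. specialize (Hw t Ht). field. lra. }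
  assert (Hsum : lsum l (fun t => a t / w t) + lsum l (fun t => b t / w t) = INR (length l)).
  { rewrite <- lsum_plus, <- (Rmult_1_r (INR (length l))), <- lsum_const.
    apply lsum_ext. intros t Ht. specialize (Hw t Ht). unfold w in *. field. lra. }
  pose proof (INR_length_pos l Hl).
  pose proof (gmean_le_amean l _ Hl Hpa). pose proof (gmean_le_amean l _ Hl Hpb).
  assert (Hfrac : gmean l (fun t => a t / w t) + gmean l (fun t => b t / w t) <= 1).
  { assert (Hone : lsum l (fun t => a t / w t) / INR (length l)
                   + lsum l (fun t => b t / w t) / INR (length l) = 1).
    { rewrite <- Rdiv_plus_distr, Hsum. field. lra. }
    lra. }
  pose proof (gmean_pos l w). rewrite Ea, Eb. nra.
Qed.

Lemma gmean_const (l : list nat) (c : R) :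
  l <> nil -> 0 < c -> gmean l (fun _ => c) = c.
Proof.
  intros Hl Hc. unfold gmean. rewrite lsum_const.
  pose proof (INR_length_pos l Hl).
  replace (INR (length l) * ln c / INR (length l)) with (ln c) by (field; lra).
  now apply exp_ln.
Qed.

Lemma gmean_mono (l : list nat) (f g : nat -> R) :
  (forall t, In t l -> 0 < f t <= g t) -> gmean l f <= gmean l g.
Proof.
  intros H. unfold gmean.
  assert (Hle : lsum l (fun t => ln (f t)) <= lsum l (fun t => ln (g t))).
  { apply lsum_le. intros t Ht. destruct (H t Ht) as [Hf [Hlt|<-]]; [|lra].
    left. now apply ln_increasing. }
  destruct l as [|a l]; [simpl; lra|].
  assert (HN : 0 < INR (length (a :: l))) by (apply lt_0_INR; simpl; lia).
  apply Rmult_le_compat_r with (r := / INR (length (a :: l))) in Hle; [|left; now apply Rinv_0_lt_compat].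
  destruct Hle as [Hlt|Heq]; [left; now apply exp_increasing|right; now f_equal].
Qed.

Lemma gmean_mono_eq (l : list nat) (f g : nat -> R) :
  (forall t, In t l -> 0 < f t <= g t) -> gmean l f = gmean l g ->
  forall t, In t l -> f t = g t.
Proof.
  intros H Heq t Ht.
  assert (HN : 0 < INR (length l)) by (apply INR_length_pos; now destruct l).
  apply exp_inv in Heq.
  assert (Hsum : lsum l (fun t => ln (f t)) = lsum l (fun t => ln (g t))).
  { apply Rmult_eq_reg_r with (/ INR (length l)); [exact Heq|]. apply Rinv_neq_0_compat. lra. }
  assert (Hln : ln (f t) = ln (g t)).
  { apply (lsum_le_eq l (fun t => ln (f t)) (fun t => ln (g t))); auto.
    intros u Hu. destruct (H u Hu) as [Hf [Hlt|<-]]; [|lra]. left. now apply ln_increasing. }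
  destruct (H t Ht). apply ln_inv; lra.
Qed.

Lemma gmean_shift (n j : nat) (f : nat -> R) :
  (forall t, f (t + n)%nat = f t) ->
  gmean (seq 0 n) (fun t => f (t + j)%nat) = gmean (seq 0 n) f.
Proof.
  intros Hper. unfold gmean. f_equal. f_equal.
  apply (lsum_shift n j (fun t => ln (f t))). intros t. now rewrite Hper.
Qed.

Lemma prodR_map_pos (l : list nat) (f : nat -> R) :
  (forall t, In t l -> 0 < f t) -> 0 < prodR (map f l).
Proof.
  induction l as [|a l IH]; simpl; intros H; [lra|].
  apply Rmult_lt_0_compat; auto.
Qed.

Lemma ln_prodR_map (l : list nat) (f : nat -> R) : (forall t, In t l -> 0 < f t) ->
  ln (prodR (map f l)) = lsum l (fun t => ln (f t)).
Proof.
  induction l as [|a l IH]; simpl; intros H; [apply ln_1|].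
  rewrite ln_mult, IH; auto. apply prodR_map_pos; auto.
Qed.

Lemma Dij_plucker (r1 r2 : nat -> R) (a b c d : nat) :
  Dij r1 r2 (a, c) * Dij r1 r2 (b, d) =
  Dij r1 r2 (a, b) * Dij r1 r2 (c, d) + Dij r1 r2 (a, d) * Dij r1 r2 (b, c).
Proof. unfold Dij. simpl. ring. Qed.

(** Twisted periodic extension of the columns: column [t+1] is [(-1)^q] times column
    [(t mod n)+1], with [q = t / n]. *)
Definition ext_row (n : nat) (r : nat -> R) (t : nat) : R :=
  (-1) ^ (t / n) * r (S (t mod n)).

Definition ext_minor (n : nat) (r1 r2 : nat -> R) (t u : nat) : R :=
  Dij (ext_row n r1) (ext_row n r2) (t, u).

Section Extension.
Variables (n : nat) (r1 r2 : nat -> R).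
Hypothesis n_pos : (n <> 0)%nat.

Lemma ext_row_shift (r : nat -> R) (t : nat) : ext_row n r (t + n) = - ext_row n r t.
Proof.
  unfold ext_row. replace (t + n)%nat with (t + 1 * n)%nat by lia.
  rewrite Nat.div_add, Nat.Div0.mod_add by lia. rewrite Nat.add_1_r. simpl pow. ring.
Qed.

Lemma ext_row_low (r : nat -> R) (t : nat) : (t < n)%nat -> ext_row n r t = r (S t).
Proof. intros H. unfold ext_row. rewrite Nat.div_small, Nat.mod_small by lia. simpl. ring. Qed.

Lemma ext_row_high (r : nat -> R) (t : nat) :
  (n <= t < n + n)%nat -> ext_row n r t = - r (S (t - n)).
Proof.
  intros H. replace t with (t - n + n)%nat at 1 by lia.
  rewrite ext_row_shift, ext_row_low by lia. reflexivity.
Qed.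

Lemma ext_minor_shift (t u q : nat) :
  ext_minor n r1 r2 (t + q * n) (u + q * n) = ext_minor n r1 r2 t u.
Proof.
  induction q as [|q IH]; [unfold ext_minor; do 2 f_equal; lia|].
  replace (t + S q * n)%nat with (t + q * n + n)%nat by lia.
  replace (u + S q * n)%nat with (u + q * n + n)%nat by lia.
  rewrite <- IH. unfold ext_minor, Dij. simpl. rewrite !ext_row_shift. ring.
Qed.

(* The sign from [v_{t+n} = -v_t] cancels the sign from swapping the two columns. *)
Lemma ext_minor_wrap (t u : nat) : ext_minor n r1 r2 u (t + n) = ext_minor n r1 r2 t u.
Proof. unfold ext_minor, Dij. simpl. rewrite !ext_row_shift. ring. Qed.

Lemma ext_minor_base (t k : nat) : (t < n)%nat -> (1 <= k)%nat -> (k < n)%nat ->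
  ext_minor n r1 r2 t (t + k) =
  if Nat.ltb (t + k) n then Dij r1 r2 (S t, S (t + k)) else Dij r1 r2 (S (t + k - n), S t).
Proof.
  intros Ht Hk1 Hk2. unfold ext_minor, Dij. simpl.
  destruct (Nat.ltb_spec (t + k) n).
  - rewrite !ext_row_low by lia. reflexivity.
  - rewrite (ext_row_low r1 t), (ext_row_low r2 t), (ext_row_high r1), (ext_row_high r2) by lia.
    ring.
Qed.

Lemma ext_minor_pos (t k : nat) : totally_positive n r1 r2 -> (1 <= k)%nat -> (k < n)%nat ->
  0 < ext_minor n r1 r2 t (t + k).
Proof.
  intros TP Hk1 Hk2.
  pose proof (Nat.div_mod t n n_pos). pose proof (Nat.mod_upper_bound t n n_pos).
  replace t with (t mod n + t / n * n)%nat at 1 by lia.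
  replace (t + k)%nat with (t mod n + k + t / n * n)%nat by lia.
  rewrite ext_minor_shift, ext_minor_base by lia.
  destruct (Nat.ltb_spec (t mod n + k) n); apply TP; lia.
Qed.

End Extension.

(** Orbits of [sigma] in terms of the extension: the [m]-th element of [O_k] is the
    pair of columns [(m, m+k)] of the extended matrix (numbering columns from 0). *)
Lemma orbit_iter (n k m : nat) : (1 <= k)%nat -> (k < n)%nat -> (m < n)%nat ->
  Nat.iter m (sigmaP n) (1%nat, S k) =
  if Nat.ltb (m + k) n then (S m, S (m + k)) else (S (m + k - n), S m).
Proof.
  intros Hk1 Hk2. induction m as [|m IH]; intros Hm.
  - simpl. destruct (Nat.ltb_spec k n); [reflexivity|lia].
  - simpl Nat.iter. rewrite IH by lia. unfold sigmaP.
    destruct (Nat.ltb_spec (m + k) n); simpl fst; simpl snd.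
    + destruct (Nat.ltb_spec (S (m + k)) n), (Nat.ltb_spec (S m + k) n); try lia; f_equal; lia.
    + destruct (Nat.ltb_spec (S m) n), (Nat.ltb_spec (S m + k) n); try lia; f_equal; lia.
Qed.

Lemma fold_max_ge (l : list R) (x : R) : In x l -> x <= fold_right Rmax 0 l.
Proof.
  induction l as [|a l IH]; simpl; intros H; [contradiction|]. destruct H as [<-|H].
  - apply Rmax_l.
  - eapply Rle_trans; [apply IH; auto|apply Rmax_r].
Qed.

Lemma fold_max_le (l : list R) (h : R) :
  0 <= h -> (forall x, In x l -> x <= h) -> fold_right Rmax 0 l <= h.
Proof. intros H0. induction l; simpl; intros H; [lra|]. apply Rmax_lub; auto. Qed.

Lemma fold_min_le (l : list R) (d x : R) : In x l -> fold_right Rmin d l <= x.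
Proof.
  induction l as [|a l IH]; simpl; intros H; [contradiction|]. destruct H as [<-|H].
  - apply Rmin_l.
  - eapply Rle_trans; [apply Rmin_r|apply IH; auto].
Qed.

Lemma fold_min_ge (l : list R) (d lo : R) :
  lo <= d -> (forall x, In x l -> lo <= x) -> lo <= fold_right Rmin d l.
Proof. intros H0. induction l; simpl; intros H; [lra|]. apply Rmin_glb; auto. Qed.

Lemma fold_min_in (l : list R) (d : R) : In (fold_right Rmin d l) (d :: l).
Proof.
  induction l as [|a l IH]; simpl in *; [auto|].
  destruct (Rle_or_lt a (fold_right Rmin d l)).
  - rewrite Rmin_left by auto. auto.
  - rewrite Rmin_right by lra. tauto.
Qed.

Lemma pairs_spec (n : nat) (p : nat * nat) :
  In p (pairs n) <-> (1 <= fst p)%nat /\ (fst p < snd p)%nat /\ (snd p <= n)%nat.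
Proof.
  destruct p as [i j]. unfold pairs. rewrite in_flat_map. simpl. split.
  - intros [i' [Hi H]]. apply in_map_iff in H. destruct H as [j' [[= <- <-] Hj]].
    apply in_seq in Hi. apply in_seq in Hj. lia.
  - intros H. exists i. split; [apply in_seq; lia|]. apply in_map, in_seq. lia.
Qed.

Section Extremes.
Variables (n : nat) (r1 r2 : nat -> R).

Lemma Delta_le_max (i j : nat) : (1 <= i)%nat -> (i < j)%nat -> (j <= n)%nat ->
  Dij r1 r2 (i, j) <= maxDelta n r1 r2.
Proof. intros. apply fold_max_ge, in_map, pairs_spec. simpl. lia. Qed.

Lemma min_le_Delta (i j : nat) : (1 <= i)%nat -> (i < j)%nat -> (j <= n)%nat ->
  minDelta n r1 r2 <= Dij r1 r2 (i, j).
Proof. intros. apply fold_min_le, in_map, pairs_spec. simpl. lia. Qed.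

Lemma maxDelta_le (h : R) : 0 <= h ->
  (forall i j, (1 <= i)%nat -> (i < j)%nat -> (j <= n)%nat -> Dij r1 r2 (i, j) <= h) ->
  maxDelta n r1 r2 <= h.
Proof.
  intros H0 H. apply fold_max_le; auto. intros x Hx. apply in_map_iff in Hx.
  destruct Hx as [[i j] [<- Hp]]. apply pairs_spec in Hp. simpl in Hp. apply H; lia.
Qed.

(* For [n >= 2] the default value [maxDelta] of the fold is itself a coordinate. *)
Lemma minDelta_ge (lo : R) : (2 <= n)%nat ->
  (forall i j, (1 <= i)%nat -> (i < j)%nat -> (j <= n)%nat -> lo <= Dij r1 r2 (i, j)) ->
  lo <= minDelta n r1 r2.
Proof.
  intros Hn H. apply fold_min_ge.
  - eapply Rle_trans; [apply (H 1%nat 2%nat); lia|apply Delta_le_max; lia].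
  - intros x Hx. apply in_map_iff in Hx.
    destruct Hx as [[i j] [<- Hp]]. apply pairs_spec in Hp. simpl in Hp. apply H; lia.
Qed.

Lemma minDelta_pos : (2 <= n)%nat -> totally_positive n r1 r2 -> 0 < minDelta n r1 r2.
Proof.
  intros Hn TP. assert (H12 : 0 < Dij r1 r2 (1%nat, 2%nat)) by (apply TP; lia).
  destruct (fold_min_in (map (Dij r1 r2) (pairs n)) (maxDelta n r1 r2)) as [Hm|Hm];
    unfold minDelta; rewrite <- ?Hm.
  - eapply Rlt_le_trans; [exact H12|apply Delta_le_max; lia].
  - apply in_map_iff in Hm. destruct Hm as [[i j] [<- Hp]].
    apply pairs_spec in Hp. simpl in Hp. apply TP; lia.
Qed.

End Extremes.

Definition diag_minor (n : nat) (r1 r2 : nat -> R) (k t : nat) : R :=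
  ext_minor n r1 r2 t (t + k).

Section Diagonals.
Variables (n : nat) (r1 r2 : nat -> R).
Hypothesis n_pos : (n <> 0)%nat.
Hypothesis TP : totally_positive n r1 r2.

Lemma diag_minor_pos (k t : nat) : (1 <= k)%nat -> (k < n)%nat -> 0 < diag_minor n r1 r2 k t.
Proof. intros. now apply ext_minor_pos. Qed.

Lemma diag_minor_periodic (k t : nat) :
  diag_minor n r1 r2 k (t + n) = diag_minor n r1 r2 k t.
Proof.
  unfold diag_minor. rewrite <- (ext_minor_shift n r1 r2 n_pos t (t + k) 1).
  unfold ext_minor. do 2 f_equal; lia.
Qed.

Lemma orbit_minor (k : nat) (p : nat * nat) : (1 <= k)%nat -> (k < n)%nat ->
  In p (orbit n k) -> exists t, (t < n)%nat /\ Dij r1 r2 p = diag_minor n r1 r2 k t.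
Proof.
  intros Hk1 Hk2 Hp. unfold orbit in Hp. apply in_map_iff in Hp.
  destruct Hp as [t [<- Ht]]. apply in_seq in Ht. exists t. split; [lia|].
  unfold diag_minor. rewrite ext_minor_base, orbit_iter by lia.
  now destruct (Nat.ltb (t + k) n).
Qed.

Lemma Dk_gmean (k : nat) : (1 <= k)%nat -> (k < n)%nat ->
  Dk n k r1 r2 = gmean (seq 0 n) (diag_minor n r1 r2 k).
Proof.
  intros Hk1 Hk2. unfold Dk, Rpower, gmean. rewrite length_seq.
  assert (Hmap : map (Dij r1 r2) (orbit n k) = map (diag_minor n r1 r2 k) (seq 0 n)).
  { unfold orbit. rewrite map_map. apply map_ext_in. intros t Ht. apply in_seq in Ht.
    unfold diag_minor. rewrite ext_minor_base, orbit_iter by lia.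
    now destruct (Nat.ltb (t + k) n). }
  rewrite Hmap, ln_prodR_map by (intros; now apply diag_minor_pos).
  f_equal. unfold Rdiv. ring.
Qed.

Lemma gmean_diag_shift (k j : nat) : (1 <= k)%nat -> (k < n)%nat ->
  gmean (seq 0 n) (fun t => diag_minor n r1 r2 k (t + j)) = Dk n k r1 r2.
Proof.
  intros. rewrite Dk_gmean by auto. apply gmean_shift. intros t. apply diag_minor_periodic.
Qed.

Lemma Dk_sym (k : nat) : (1 <= k)%nat -> (k < n)%nat -> Dk n (n - k) r1 r2 = Dk n k r1 r2.
Proof.
  intros Hk1 Hk2. rewrite <- (gmean_diag_shift k (n - k)) by auto.
  rewrite Dk_gmean by lia. apply gmean_ext. intros t _.
  unfold diag_minor. rewrite <- (ext_minor_wrap n r1 r2 n_pos t (t + (n - k))).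
  unfold ext_minor. do 2 f_equal; lia.
Qed.

Lemma diag_minor_plucker (k t : nat) : (1 <= k)%nat ->
  diag_minor n r1 r2 k t * diag_minor n r1 r2 k (t + 1) =
  diag_minor n r1 r2 1 t * diag_minor n r1 r2 1 (t + k)
  + diag_minor n r1 r2 (k + 1) t * diag_minor n r1 r2 (k - 1) (t + 1).
Proof.
  intros Hk. unfold diag_minor, ext_minor.
  replace (t + 1 + k)%nat with (t + k + 1)%nat by lia.
  replace (t + 1 + (k - 1))%nat with (t + k)%nat by lia.
  replace (t + (k + 1))%nat with (t + k + 1)%nat by lia.
  apply Dij_plucker.
Qed.

(* Averaging the Plücker relation: [D_1^2 + D_{k-1} D_{k+1} <= D_k^2]. *)
Lemma Dk_plucker_ineq (k : nat) : (2 <= k)%nat -> (k + 2 <= n)%nat ->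
  Dk n (k - 1) r1 r2 * Dk n (k + 1) r1 r2 + Dk n 1 r1 r2 * Dk n 1 r1 r2
  <= Dk n k r1 r2 * Dk n k r1 r2.
Proof.
  intros Hk1 Hk2. set (F := diag_minor n r1 r2).
  assert (HF : forall j t, (1 <= j)%nat -> (j < n)%nat -> 0 < F j t)
    by (intros; now apply diag_minor_pos).
  pose proof (seq0_nonempty n n_pos) as Hne.
  pose proof (gmean_superadditive (seq 0 n)
    (fun t => F 1%nat t * F 1%nat (t + k)%nat) (fun t => F (k + 1)%nat t * F (k - 1)%nat (t + 1)%nat)
    Hne) as Hsup.
  rewrite (gmean_ext _ (fun t => _ + _) (fun t => F k t * F k (t + 1)%nat)) in Hsup
    by (intros; symmetry; apply diag_minor_plucker; lia).
  rewrite !gmean_mult in Hsup by (intros; apply HF; lia).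
  unfold F in Hsup. rewrite !gmean_diag_shift, <- !Dk_gmean in Hsup by lia.
  enough (Dk n 1 r1 r2 * Dk n 1 r1 r2 + Dk n (k + 1) r1 r2 * Dk n (k - 1) r1 r2
          <= Dk n k r1 r2 * Dk n k r1 r2) by lra.
  apply Hsup; intros; apply Rmult_lt_0_compat; apply HF; lia.
Qed.

(* Every diagonal minor over one period is a genuine Plücker coordinate. *)
Lemma diag_minor_between (k t : nat) : (1 <= k)%nat -> (k < n)%nat -> (t < n)%nat ->
  minDelta n r1 r2 <= diag_minor n r1 r2 k t <= maxDelta n r1 r2.
Proof.
  intros Hk1 Hk2 Ht. unfold diag_minor. rewrite ext_minor_base by lia.
  destruct (Nat.ltb_spec (t + k) n); split;
    (apply min_le_Delta || apply Delta_le_max); lia.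
Qed.

(* Being a geometric mean of coordinates, [D_k] lies between their extremes. *)
Lemma Dk_between (k : nat) : (1 <= k)%nat -> (k < n)%nat ->
  minDelta n r1 r2 <= Dk n k r1 r2 <= maxDelta n r1 r2.
Proof.
  intros Hk1 Hk2. pose proof (minDelta_pos n r1 r2 ltac:(lia) TP) as Hm.
  pose proof (diag_minor_between k 0 Hk1 Hk2 ltac:(lia)).
  pose proof (seq0_nonempty n n_pos) as Hne.
  rewrite Dk_gmean by auto. split.
  - rewrite <- (gmean_const (seq 0 n) (minDelta n r1 r2)) by auto.
    apply gmean_mono. intros t Ht. apply in_seq in Ht.
    pose proof (diag_minor_between k t Hk1 Hk2 ltac:(lia)). lra.
  - rewrite <- (gmean_const (seq 0 n) (maxDelta n r1 r2)) by (auto; lra).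
    apply gmean_mono. intros t Ht. apply in_seq in Ht.
    pose proof (diag_minor_between k t Hk1 Hk2 ltac:(lia)). split; [now apply diag_minor_pos|lra].
Qed.

Lemma orbit_at_min (k : nat) : (1 <= k)%nat -> (k < n)%nat ->
  Dk n k r1 r2 = minDelta n r1 r2 -> forall p, In p (orbit n k) -> Dij r1 r2 p = minDelta n r1 r2.
Proof.
  intros Hk1 Hk2 HD p Hp. destruct (orbit_minor k p Hk1 Hk2 Hp) as [t [Ht ->]].
  pose proof (minDelta_pos n r1 r2 ltac:(lia) TP) as Hm.
  pose proof (seq0_nonempty n n_pos) as Hne.
  symmetry. apply (gmean_mono_eq (seq 0 n) (fun _ => minDelta n r1 r2)); [| |apply in_seq; lia].
  - intros u Hu. apply in_seq in Hu. pose proof (diag_minor_between k u Hk1 Hk2 ltac:(lia)). lra.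
  - rewrite gmean_const, <- Dk_gmean by auto. auto.
Qed.

Lemma orbit_at_max (k : nat) : (1 <= k)%nat -> (k < n)%nat ->
  Dk n k r1 r2 = maxDelta n r1 r2 -> forall p, In p (orbit n k) -> Dij r1 r2 p = maxDelta n r1 r2.
Proof.
  intros Hk1 Hk2 HD p Hp. destruct (orbit_minor k p Hk1 Hk2 Hp) as [t [Ht ->]].
  pose proof (diag_minor_pos k 0 Hk1 Hk2).
  pose proof (diag_minor_between k 0 Hk1 Hk2 ltac:(lia)).
  pose proof (seq0_nonempty n n_pos) as Hne.
  apply (gmean_mono_eq (seq 0 n) _ (fun _ => maxDelta n r1 r2)); [| |apply in_seq; lia].
  - intros u Hu. apply in_seq in Hu. pose proof (diag_minor_between k u Hk1 Hk2 ltac:(lia)).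
    split; [now apply diag_minor_pos|lra].
  - rewrite gmean_const, <- Dk_gmean by (auto; lra). auto.
Qed.

End Diagonals.

Lemma argmin_nat (f : nat -> R) (N : nat) : (1 <= N)%nat ->
  exists k, (1 <= k <= N)%nat /\ forall j, (1 <= j <= N)%nat -> f k <= f j.
Proof.
  intros HN. induction N as [|N IH]; [lia|].
  destruct (Nat.eq_dec N 0) as [->|HN0].
  - exists 1%nat. split; [lia|]. intros j Hj. replace j with 1%nat by lia. lra.
  - destruct IH as [k [Hk Hmin]]; [lia|].
    destruct (Rle_lt_dec (f k) (f (S N))).
    + exists k. split; [lia|]. intros j Hj.
      destruct (Nat.eq_dec j (S N)); [subst; auto|apply Hmin; lia].
    + exists (S N). split; [lia|]. intros j Hj.
      destruct (Nat.eq_dec j (S N)); [subst; lra|]. specialize (Hmin j ltac:(lia)). lra.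
Qed.

Section Comparison.
Variables (N : nat) (a b : nat -> R).
Hypothesis a_pos : forall k, (1 <= k <= N)%nat -> 0 < a k.
Hypothesis b_pos : forall k, (1 <= k <= N)%nat -> 0 < b k.
Hypothesis a_rec : forall k, (2 <= k)%nat -> (k + 1 <= N)%nat ->
  a (k - 1)%nat * a (k + 1)%nat + a 1%nat * a 1%nat <= a k * a k.
Hypothesis b_rec : forall k, (2 <= k)%nat -> (k + 1 <= N)%nat ->
  b k * b k = b (k - 1)%nat * b (k + 1)%nat + b 1%nat * b 1%nat.
Hypothesis first_eq : a 1%nat = b 1%nat.

(* With equal end values, [a] dominates [b]: at a minimum [g < 1] of [a_k / b_k] in
   the interior, the recurrences would give [g^2 b_k^2 > g^2 b_k^2]. *)
Lemma seq_dominates : a N = b N -> forall k, (1 <= k <= N)%nat -> b k <= a k.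
Proof.
  intros last_eq k Hk.
  destruct (argmin_nat (fun j => a j / b j) N ltac:(lia)) as [k0 [Hk0 Hmin]].
  set (g := a k0 / b k0) in *.
  assert (Hscaled : forall j, (1 <= j <= N)%nat -> g * b j <= a j).
  { intros j Hj. specialize (Hmin j Hj). specialize (b_pos j Hj). simpl in Hmin.
    replace (a j) with (a j / b j * b j) by (field; lra). apply Rmult_le_compat_r; lra. }
  assert (Hg : 1 <= g).
  { destruct (Rle_lt_dec 1 g) as [|Hlt]; [assumption|exfalso].
    assert (Hg0 : 0 < g) by (apply Rdiv_lt_0_compat; auto).
    assert (Eg : a k0 = g * b k0) by (unfold g; specialize (b_pos k0 Hk0); field; lra).
    assert (Hend : a k0 <> b k0).
    { intros Hab. specialize (b_pos k0 Hk0). rewrite Hab in Eg. nra. }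
    assert (H1 : k0 <> 1%nat) by (intros ->; contradiction).
    assert (HN : k0 <> N) by (intros ->; contradiction).
    pose proof (a_rec k0 ltac:(lia) ltac:(lia)). pose proof (b_rec k0 ltac:(lia) ltac:(lia)).
    pose proof (Hscaled (k0 - 1)%nat ltac:(lia)). pose proof (Hscaled (k0 + 1)%nat ltac:(lia)).
    pose proof (b_pos (k0 - 1)%nat ltac:(lia)). pose proof (b_pos (k0 + 1)%nat ltac:(lia)).
    pose proof (b_pos 1%nat ltac:(lia)).
    assert (g * b (k0 - 1)%nat * (g * b (k0 + 1)%nat) <= a (k0 - 1)%nat * a (k0 + 1)%nat)
      by (apply Rmult_le_compat; nra).
    rewrite first_eq, Eg in *.
    assert (0 < (1 - g * g) * (b 1%nat * b 1%nat)) by (apply Rmult_lt_0_compat; nra).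
    nra. }
  specialize (Hscaled k Hk). specialize (b_pos k Hk). nra.
Qed.

Lemma seq_rigid_down (d : nat) : (forall k, (1 <= k <= N)%nat -> b k <= a k) ->
  (1 <= d)%nat -> (d + 1 <= N)%nat -> a d = b d ->
  forall k, (1 <= k <= d)%nat -> a k = b k.
Proof.
  intros Hdom Hd1 Hd2 Hd.
  assert (Hstep : forall j, (2 <= j)%nat -> (j + 1 <= N)%nat -> a j = b j ->
                  a (j - 1)%nat = b (j - 1)%nat).
  { intros j Hj1 Hj2 Hj. pose proof (a_rec j Hj1 Hj2). pose proof (b_rec j Hj1 Hj2).
    pose proof (Hdom (j - 1)%nat ltac:(lia)). pose proof (Hdom (j + 1)%nat ltac:(lia)).
    pose proof (b_pos (j - 1)%nat ltac:(lia)). pose proof (b_pos (j + 1)%nat ltac:(lia)).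
    rewrite Hj, first_eq in *.
    destruct (Rle_lt_dec (a (j - 1)%nat) (b (j - 1)%nat)); [lra|nra]. }
  assert (Hdown : forall t, (t <= d - 1)%nat -> a (d - t)%nat = b (d - t)%nat).
  { induction t as [|t IH]; intros Ht; [now rewrite Nat.sub_0_r|].
    replace (d - S t)%nat with (d - t - 1)%nat by lia. apply Hstep; [lia|lia|]. apply IH. lia. }
  intros k Hk. replace k with (d - (d - k))%nat by lia. apply Hdown. lia.
Qed.

End Comparison.

Section Sines.
Variable n : nat.
Hypothesis n_ge3 : (3 <= n)%nat.

Let INR_n_pos : 0 < INR n.
Proof. apply lt_0_INR. lia. Qed.

Lemma s_pos (k : nat) : (1 <= k)%nat -> (k < n)%nat -> 0 < s n k.
Proof.
  intros Hk1 Hk2. unfold s. pose proof PI_RGT_0.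
  assert (1 <= INR k) by (apply (le_INR 1); lia).
  assert (INR k < INR n) by (apply lt_INR; lia).
  apply sin_gt_0.
  - apply Rdiv_lt_0_compat; nra.
  - apply Rmult_lt_reg_r with (INR n); auto.
    replace (INR k * PI / INR n * INR n) with (INR k * PI) by (field; lra). nra.
Qed.

Lemma s_sym (k : nat) : (k <= n)%nat -> s n (n - k) = s n k.
Proof.
  intros Hk. unfold s. rewrite minus_INR, <- sin_PI_x by auto. f_equal. field. lra.
Qed.

Lemma s_rec (k : nat) : (1 <= k)%nat ->
  s n k * s n k = s n (k - 1) * s n (k + 1) + s n 1 * s n 1.
Proof.
  intros Hk. unfold s. rewrite minus_INR, plus_INR by auto. simpl INR.
  set (x := INR k * PI / INR n). set (y := 1 * PI / INR n).
  replace ((INR k - 1) * PI / INR n) with (x - y) by (unfold x, y; field; lra).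
  replace ((INR k + 1) * PI / INR n) with (x + y) by (unfold x, y; field; lra).
  rewrite sin_plus, sin_minus.
  pose proof (sin2_cos2 x); pose proof (sin2_cos2 y). unfold Rsqr in *. nra.
Qed.

(* [s] increases on [0 <= k <= n/2], where [k pi / n] stays in [[0, pi/2]]. *)
Lemma s_mono (k j : nat) : (k <= j)%nat -> (2 * j <= n)%nat -> s n k <= s n j.
Proof.
  intros Hkj Hj. unfold s. pose proof PI_RGT_0.
  assert (INR k <= INR j) by (apply le_INR; lia).
  assert (0 <= INR k) by apply pos_INR.
  assert (2 * INR j <= INR n)
    by (replace 2 with (INR 2) by (simpl; lra); rewrite <- mult_INR; apply le_INR; lia).
  assert (Hrange : forall x, 0 <= x -> x <= INR j -> - (PI / 2) <= x * PI / INR n <= PI / 2).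
  { intros x Hx1 Hx2. split.
    - assert (0 <= x * PI / INR n) by (apply Rmult_le_pos; [nra|left; now apply Rinv_0_lt_compat]).
      lra.
    - apply Rmult_le_reg_r with (INR n); auto.
      replace (x * PI / INR n * INR n) with (x * PI) by (field; lra). nra. }
  destruct (Hrange (INR k)) as [? ?]; [lra|lra|].
  destruct (Hrange (INR j)) as [? ?]; [lra|lra|].
  apply sin_incr_1; auto.
  apply Rmult_le_compat_r; [left; now apply Rinv_0_lt_compat|]. apply Rmult_le_compat_r; lra.
Qed.

Lemma s_bounds (k : nat) : (1 <= k)%nat -> (k < n)%nat -> s n 1 <= s n k <= s n (n / 2).
Proof.
  intros Hk1 Hk2.
  pose proof (Nat.div_mod n 2 ltac:(lia)). pose proof (Nat.mod_upper_bound n 2 ltac:(lia)).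
  destruct (Nat.le_gt_cases k (n / 2)).
  - split; apply s_mono; lia.
  - rewrite <- (s_sym k) by lia. split; apply s_mono; lia.
Qed.

End Sines.

Definition polygon_row1 (n i : nat) : R := cos (INR i * PI / INR n).
Definition polygon_row2 (n i : nat) : R := sin (INR i * PI / INR n).

Lemma polygon_Dij (n i j : nat) : (i < j)%nat ->
  Dij (polygon_row1 n) (polygon_row2 n) (i, j) = s n (j - i).
Proof.
  intros H. unfold Dij, polygon_row1, polygon_row2, s. simpl.
  rewrite minus_INR by lia.
  replace ((INR j - INR i) * PI / INR n) with (INR j * PI / INR n - INR i * PI / INR n)
    by (unfold Rdiv; ring).
  rewrite sin_minus. ring.
Qed.

Lemma polygon_tp (n : nat) : (3 <= n)%nat ->
  totally_positive n (polygon_row1 n) (polygon_row2 n).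
Proof. intros Hn i j H1 H2 H3. rewrite polygon_Dij by auto. apply s_pos; lia. Qed.

Lemma polygon_Eratio (n : nat) : (3 <= n)%nat ->
  Eratio n (polygon_row1 n) (polygon_row2 n) <= s n (n / 2) / s n 1.
Proof.
  intros Hn.
  assert (Hrange : forall i j, (1 <= i)%nat -> (i < j)%nat -> (j <= n)%nat ->
    s n 1 <= Dij (polygon_row1 n) (polygon_row2 n) (i, j) <= s n (n / 2))
    by (intros; rewrite polygon_Dij by lia; apply s_bounds; lia).
  pose proof (Hrange 1%nat 2%nat ltac:(lia) ltac:(lia) ltac:(lia)) as H12.
  pose proof (s_pos n Hn 1 ltac:(lia) ltac:(lia)) as Hs1.
  assert (HM : maxDelta n (polygon_row1 n) (polygon_row2 n) <= s n (n / 2))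
    by (apply maxDelta_le; [lra|intros; apply Hrange; lia]).
  assert (Hm : s n 1 <= minDelta n (polygon_row1 n) (polygon_row2 n))
    by (apply minDelta_ge; [lia|intros; apply Hrange; lia]).
  assert (HM0 : 0 <= maxDelta n (polygon_row1 n) (polygon_row2 n)).
  { pose proof (Delta_le_max n (polygon_row1 n) (polygon_row2 n) 1 2 ltac:(lia) ltac:(lia) ltac:(lia)).
    lra. }
  assert (Hm0 : 0 < minDelta n (polygon_row1 n) (polygon_row2 n))
    by (apply minDelta_pos; [lia|now apply polygon_tp]).
  unfold Eratio, Rdiv. apply Rmult_le_compat; auto.
  - left. now apply Rinv_0_lt_compat.
  - apply Rinv_le_contravar; auto.
Qed.

Lemma extremes_pinned (m M s1 sd : R) : 0 < m -> 0 < s1 -> 0 < sd ->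
  m <= s1 -> sd <= M -> M / m <= sd / s1 -> M = sd /\ m = s1.
Proof.
  intros Hm Hs1 Hsd Hms HsM Hratio.
  assert (Hcross : M * s1 <= sd * m).
  { apply Rmult_le_compat_r with (r := m * s1) in Hratio; [|nra].
    replace (M / m * (m * s1)) with (M * s1) in Hratio by (field; lra).
    replace (sd / s1 * (m * s1)) with (sd * m) in Hratio by (field; lra). exact Hratio. }
  split; nra.
Qed.

Section Normalized.
Variables (n : nat) (r1 r2 : nat -> R).
Hypothesis n_ge3 : (3 <= n)%nat.
Hypothesis TP : totally_positive n r1 r2.
Hypothesis D1_eq : Dk n 1 r1 r2 = s n 1.

Let n_pos : (n <> 0)%nat.
Proof. lia. Qed.

Lemma Dk_ge_s (k : nat) : (1 <= k)%nat -> (k <= n - 1)%nat -> s n k <= Dk n k r1 r2.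
Proof.
  intros Hk1 Hk2. apply (seq_dominates (n - 1) (fun j => Dk n j r1 r2) (s n)); auto; try lia.
  - intros j Hj. rewrite Dk_gmean by (auto; lia). apply gmean_pos.
  - intros j Hj. apply s_pos; lia.
  - intros j Hj1 Hj2. apply Dk_plucker_ineq; auto; lia.
  - intros j Hj1 Hj2. apply s_rec; lia.
  - rewrite (Dk_sym n r1 r2 n_pos TP 1), (s_sym n n_ge3 1) by lia. exact D1_eq.
Qed.

Lemma Dk_eq_s : Dk n (n / 2) r1 r2 = s n (n / 2) ->
  forall k, (1 <= k)%nat -> (k <= n - 1)%nat -> Dk n k r1 r2 = s n k.
Proof.
  intros Hd.
  pose proof (Nat.div_mod n 2 ltac:(lia)). pose proof (Nat.mod_upper_bound n 2 ltac:(lia)).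
  assert (Hlow : forall k, (1 <= k)%nat -> (k <= n / 2)%nat -> Dk n k r1 r2 = s n k).
  { intros k Hk1 Hk2.
    apply (seq_rigid_down (n - 1) (fun j => Dk n j r1 r2) (s n)) with (d := (n / 2)%nat);
      auto; try lia.
    - intros j Hj. apply s_pos; lia.
    - intros j Hj1 Hj2. apply Dk_plucker_ineq; auto; lia.
    - intros j Hj1 Hj2. apply s_rec; lia.
    - intros j Hj. apply Dk_ge_s; lia. }
  intros k Hk1 Hk2. destruct (Nat.le_gt_cases k (n / 2)); [now apply Hlow|].
  rewrite <- (Dk_sym n r1 r2 n_pos TP k), <- (s_sym n n_ge3 k) by lia. apply Hlow; lia.
Qed.

End Normalized.

Theorem mainTheorem2 (n : nat) (r1 r2 : nat -> R) :
  (3 <= n)%nat ->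
  totally_positive n r1 r2 ->
  (* x = rowspan X minimizes Eratio over Gr^{>0}(2,n) *)
  (forall q1 q2 : nat -> R, totally_positive n q1 q2 -> Eratio n r1 r2 <= Eratio n q1 q2) ->
  Dk n 1 r1 r2 = sin (PI / INR n) ->
  (forall k : nat, (1 <= k)%nat -> (k <= n - 1)%nat -> Dk n k r1 r2 = s n k) /\
  (forall i j : nat, (1 <= i)%nat -> (i < j)%nat -> (j <= n)%nat ->
     s n 1 <= Dij r1 r2 (i, j) <= s n (Nat.div n 2)) /\
  (forall p, In p (orbit n 1) -> Dij r1 r2 p = s n 1) /\
  (forall p, In p (orbit n (Nat.div n 2)) -> Dij r1 r2 p = s n (Nat.div n 2)).
Proof.
  intros Hn TP Hmin HD1.
  assert (Hn0 : (n <> 0)%nat) by lia.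
  assert (Hd : (1 <= n / 2)%nat /\ (n / 2 < n)%nat).
  { pose proof (Nat.div_mod n 2 ltac:(lia)). pose proof (Nat.mod_upper_bound n 2 ltac:(lia)). lia. }
  assert (E1 : Dk n 1 r1 r2 = s n 1) by (rewrite HD1; unfold s; f_equal; simpl; lra).
  pose proof (Dk_between n r1 r2 Hn0 TP 1 ltac:(lia) ltac:(lia)) as B1.
  pose proof (Dk_between n r1 r2 Hn0 TP (n / 2) ltac:(lia) ltac:(lia)) as Bd.
  pose proof (Dk_ge_s n r1 r2 Hn TP E1 (n / 2) ltac:(lia) ltac:(lia)) as Gd.
  (* Comparison with the regular polygon pins the extreme coordinates. *)
  assert (Hratio : maxDelta n r1 r2 / minDelta n r1 r2 <= s n (n / 2) / s n 1)
    by exact (Rle_trans _ _ _ (Hmin _ _ (polygon_tp n Hn)) (polygon_Eratio n Hn)).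
  destruct (extremes_pinned (minDelta n r1 r2) (maxDelta n r1 r2) (s n 1) (s n (n / 2)))
    as [EM Em]; [apply minDelta_pos; auto; lia|apply s_pos; lia|apply s_pos; lia|lra|lra|exact Hratio|].
  assert (Ed : Dk n (n / 2) r1 r2 = s n (n / 2)) by lra.
  split; [exact (Dk_eq_s n r1 r2 Hn TP E1 Ed)|].
  split.
  { intros i j Hi Hij Hj. rewrite <- Em, <- EM.
    split; [apply min_le_Delta|apply Delta_le_max]; auto. }
  rewrite <- Em, <- EM. split.
  - apply (orbit_at_min n r1 r2 Hn0 TP 1); [lia|lia|congruence].
  - apply (orbit_at_max n r1 r2 Hn0 TP (n / 2)); [lia|lia|congruence].
Qed.
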